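(* Let $V\colon \mathrm{Alg}(\mathcal T,\mathcal E)\to\mathrm{Alg}(\mathcal T)$ be the inclusion. For every $\mathcal T$-algebra $\mathbb A=\langle A,\alpha\rangle$, the algebra $\langle A/\mathcal E,\alpha/\mathcal E\rangle$ satisfies $\mathcal E$. The assignment $H\langle A,\alpha\rangle=\langle A/\mathcal E,\alpha/\mathcal E\rangle$ extends to a functor $H\colon\mathrm{Alg}(\mathcal T)\to\mathrm{Alg}(\mathcal T,\mathcal E)$ that is left adjoint to $V$. The unit of this adjunction has components $s_{\mathbb A}$, and its counit is the identity at every $\mathbb A\in\mathrm{Alg}(\mathcal T,\mathcal E)$. In particular, $\mathrm{Alg}(\mathcal T,\mathcal E)$ is a full reflective subcategory of $\mathrm{Alg}(\mathcal T)$.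
   Context: Let $\mathcal C$ be a category and $\mathcal T=\langle T,\eta,\mu\rangle$ a monad on $\mathcal C$. - $\mathrm{Alg}(\mathcal T)$ is the category of Eilenberg–Moore $\mathcal T$-algebras $\langle A,\alpha\colon TA\to A\rangle$ and their homomorphisms. - $U\colon\mathrm{Alg}(\mathcal T)\to\mathcal C$ is the forgetful functor. - For a $\mathcal T$-algebra $\langle A,\alpha\rangle$ and an arrow $f\colon X\to A$, we write $f^\sharp=\alpha\circ Tf$. This is the unique homomorphism $\langle TX,\mu_X\rangle\to\langle A,\alpha\rangle$ with $f^\sharp\circ\eta_X=f$. $\mathcal T$-equations are a triple $\mathcal E=\langle E,l,r\rangle$, where $E$ is an endofunctor on $\mathcal C$ and $l,r\colon E\Rightarrow T$ are natural transformations. Standing assumptions: 1. $\mathrm{Alg}(\mathcal T)$ has coequalizers. 2. $U$ and $TU$ map regular epimorphisms of $\mathrm{Alg}(\mathcal T)$ to epimorphisms of $\mathcal C$. 3. $EU$ maps regular epimorphisms of $\mathrm{Alg}(\mathcal T)$ to epimorphisms of $\mathcal C$. For $\mathbb A=\langle A,\alpha\rangle\in\mathrm{Alg}(\mathcal T)$, let $l_A^\sharp=\mu_A\circ Tl_A$ and $r_A^\sharp=\mu_A\circ Tr_A$. These are homomorphisms $\langle TEA,\mu_{EA}\rangle\to\langle TA,\mu_A\rangle$. We write $s_{\mathbb A}\colon\langle A,\alpha\rangle\to\langle A/\mathcal E,\alpha/\mathcal E\rangle$ for a chosen coequalizer in $\mathrm{Alg}(\mathcal T)$ of the pair $\alpha\circ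 l_A^\sharp,\ \alpha\circ r_A^\sharp\colon\langle TEA,\mu_{EA}\rangle\to\langle A,\alpha\rangle$. A $\mathcal T$-algebra $\langle A,\alpha\rangle$ satisfies $\mathcal E$ if $\alpha\circ l_A=\alpha\circ r_A$. $\mathrm{Alg}(\mathcal T,\mathcal E)$ is the full subcategory of $\mathrm{Alg}(\mathcal T)$ on the algebras satisfying $\mathcal E$. Coequalizers are chosen so that $s_{\mathbb A}=\mathrm{id}$ whenever $\mathbb A$ satisfies $\mathcal E$. *)

From Stdlib Require Import ProofIrrelevance.

Set Implicit Arguments.
Unset Strict Implicit.

Record Category := {
  Ob :> Type;
  Hom : Ob -> Ob -> Type;
  idm : forall A, Hom A A;
  comp : forall A B C, Hom B C -> Hom A B -> Hom A C;
  comp_id_l : forall A B (f : Hom A B), comp (idm B) f = f;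
  comp_id_r : forall A B (f : Hom A B), comp f (idm A) = f;
  comp_assoc : forall A B C D (h : Hom C D) (g : Hom B C) (f : Hom A B),
      comp h (comp g f) = comp (comp h g) f
}.
Arguments Hom {c} _ _.
Arguments idm {c} _.
Arguments comp {c A B C} _ _.
Notation "g ∘ f" := (comp g f) (at level 40, left associativity).

Record Functor (C D : Category) := {
  fobj :> C -> D;
  fmap : forall A B, Hom A B -> Hom (fobj A) (fobj B);
  fmap_id : forall A, fmap (idm A) = idm (fobj A);
  fmap_comp : forall A B Cc (g : Hom B Cc) (f : Hom A B),
      fmap (g ∘ f) = fmap g ∘ fmap f
}.
Arguments fmap {C D} f {A B} _ : rename.

Definition epi (C : Category) (A B : C) (q : Hom A B) : Prop :=
  forall Z (u v : Hom B Z), u ∘ q = v ∘ q -> u = v.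

Definition is_coequalizer (C : Category) (P A Q : C) (f g : Hom P A)
  (q : Hom A Q) : Prop :=
  q ∘ f = q ∘ g /\
  forall Z (h : Hom A Z), h ∘ f = h ∘ g -> exists! u : Hom Q Z, u ∘ q = h.

Definition has_coequalizers (C : Category) : Prop :=
  forall (P A : C) (f g : Hom P A), exists (Q : C) (q : Hom A Q),
    is_coequalizer f g q.

Definition regular_epi (C : Category) (A Q : C) (q : Hom A Q) : Prop :=
  exists (P : C) (f g : Hom P A), is_coequalizer f g q.

Record Adjunction (C D : Category) (F : Functor C D) (G : Functor D C) := {
  adj_unit : forall A : C, Hom A (G (F A));
  adj_counit : forall B : D, Hom (F (G B)) B;
  adj_unit_nat : forall A A' (f : Hom A A'),
      fmap G (fmap F f) ∘ adj_unit A = adj_unit A' ∘ f;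
  adj_counit_nat : forall B B' (g : Hom B B'),
      g ∘ adj_counit B = adj_counit B' ∘ fmap F (fmap G g);
  adj_triangle_F : forall A : C,
      adj_counit (F A) ∘ fmap F (adj_unit A) = idm (F A);
  adj_triangle_G : forall B : D,
      fmap G (adj_counit B) ∘ adj_unit (G B) = idm (G B)
}.

Record Monad (C : Category) := {
  mT :> Functor C C;
  meta : forall X : C, Hom X (mT X);
  mmu : forall X : C, Hom (mT (mT X)) (mT X);
  meta_nat : forall X Y (f : Hom X Y), fmap mT f ∘ meta X = meta Y ∘ f;
  mmu_nat : forall X Y (f : Hom X Y),
      fmap mT f ∘ mmu X = mmu Y ∘ fmap mT (fmap mT f);
  mmu_eta_l : forall X, mmu X ∘ meta (mT X) = idm (mT X);
  mmu_eta_r : forall X, mmu X ∘ fmap mT (meta X) = idm (mT X);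
  mmu_assoc : forall X, mmu X ∘ fmap mT (mmu X) = mmu X ∘ mmu (mT X)
}.
Arguments meta {C} _ _.
Arguments mmu {C} _ _.

Section Algebras.
Variables (C : Category) (T : Monad C).

Record Alg := {
  acar : C;
  astr : Hom (T acar) acar;
  astr_unit : astr ∘ meta T acar = idm acar;
  astr_assoc : astr ∘ fmap T astr = astr ∘ mmu T acar
}.

Definition is_alg_hom (A B : Alg) (f : Hom (acar A) (acar B)) : Prop :=
  f ∘ astr A = astr B ∘ fmap T f.
Arguments is_alg_hom A B f : clear implicits.

Definition AlgHom (A B : Alg) := { f : Hom (acar A) (acar B) | is_alg_hom A B f }.

Lemma AlgHom_eq (A B : Alg) (f g : AlgHom A B) :
  proj1_sig f = proj1_sig g -> f = g.
Proof.
  destruct f as [f pf], g as [g pg]; simpl; intros ->.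
  f_equal; apply proof_irrelevance.
Qed.

Lemma alg_id_hom (A : Alg) : is_alg_hom A A (idm (acar A)).
Proof. unfold is_alg_hom. rewrite fmap_id, comp_id_l, comp_id_r. reflexivity. Qed.

Lemma alg_comp_hom (A B D : Alg) (g : AlgHom B D) (f : AlgHom A B) :
  is_alg_hom A D (proj1_sig g ∘ proj1_sig f).
Proof.
  destruct g as [g pg], f as [f pf]; unfold is_alg_hom in *; simpl.
  rewrite <- comp_assoc, pf, comp_assoc, pg, <- comp_assoc, <- fmap_comp.
  reflexivity.
Qed.

Definition alg_idm (A : Alg) : AlgHom A A := exist _ _ (alg_id_hom A).
Definition alg_comp (A B D : Alg) (g : AlgHom B D) (f : AlgHom A B) : AlgHom A D :=
  exist _ _ (alg_comp_hom g f).

Definition AlgCat : Category.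
Proof.
  refine {| Ob := Alg; Hom := AlgHom; idm := alg_idm; comp := alg_comp |}.
  - intros; apply AlgHom_eq; simpl; apply comp_id_l.
  - intros; apply AlgHom_eq; simpl; apply comp_id_r.
  - intros; apply AlgHom_eq; simpl; apply comp_assoc.
Defined.

Definition Ufun : Functor AlgCat C.
Proof.
  refine {| fobj := (fun A : AlgCat => acar A);
            fmap := (fun A B (f : Hom (c := AlgCat) A B) => proj1_sig f) |};
    reflexivity.
Defined.

Definition free_alg (X : C) : Alg.
Proof.
  refine {| acar := T X; astr := mmu T X |}.
  - apply mmu_eta_l.
  - apply mmu_assoc.
Defined.

Record Equations := {
  eqE : Functor C C;
  eql : forall X : C, Hom (eqE X) (T X);
  eqr : forall X : C, Hom (eqE X) (T X);
  eql_nat : forall X Y (f : Hom X Y), fmap T f ∘ eql X = eql Y ∘ fmap eqE f;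
  eqr_nat : forall X Y (f : Hom X Y), fmap T f ∘ eqr X = eqr Y ∘ fmap eqE f
}.

Variable Eq : Equations.

Definition satisfies (A : Alg) : Prop :=
  astr A ∘ eql Eq (acar A) = astr A ∘ eqr Eq (acar A).

(* alpha o k^sharp, where k^sharp = mu_A o T k, as a homomorphism
   <T E A, mu_{EA}> -> <A, alpha>, for k : EA -> TA natural *)
Lemma eq_pair_hom (A : Alg) (k : forall X : C, Hom (eqE Eq X) (T X))
  (knat : forall X Y (f : Hom X Y), fmap T f ∘ k X = k Y ∘ fmap (eqE Eq) f) :
  is_alg_hom (free_alg (eqE Eq (acar A))) A
    (astr A ∘ (mmu T (acar A) ∘ fmap T (k (acar A)))).
Proof.
  unfold is_alg_hom; simpl.
  set (a := acar A).
  rewrite <- !comp_assoc.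
  rewrite (mmu_nat T (k a)).
  rewrite (comp_assoc (mmu T a)), <- (mmu_assoc T a).
  rewrite !fmap_comp, !comp_assoc.
  unfold a; rewrite (astr_assoc A).
  reflexivity.
Qed.

Definition lhom (A : Alg) : AlgHom (free_alg (eqE Eq (acar A))) A :=
  exist _ _ (eq_pair_hom A (eql_nat Eq)).
Definition rhom (A : Alg) : AlgHom (free_alg (eqE Eq (acar A))) A :=
  exist _ _ (eq_pair_hom A (eqr_nat Eq)).

Definition AlgE_ob := { A : Alg | satisfies A }.

Definition AlgECat : Category.
Proof.
  refine {| Ob := AlgE_ob;
            Hom := (fun X Y : AlgE_ob => AlgHom (proj1_sig X) (proj1_sig Y));
            idm := (fun X : AlgE_ob => alg_idm (proj1_sig X));
            comp := (fun X Y Z (g : AlgHom (proj1_sig Y) (proj1_sig Z))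
                          (f : AlgHom (proj1_sig X) (proj1_sig Y)) => alg_comp g f) |}.
  - intros; apply AlgHom_eq; simpl; apply comp_id_l.
  - intros; apply AlgHom_eq; simpl; apply comp_id_r.
  - intros; apply AlgHom_eq; simpl; apply comp_assoc.
Defined.

Definition Vfun : Functor AlgECat AlgCat.
Proof.
  refine {| fobj := (fun X : AlgECat => (proj1_sig X : AlgCat));
            fmap := (fun X Y (f : Hom (c := AlgECat) X Y) => (f : Hom (c := AlgCat) _ _)) |};
    reflexivity.
Defined.

End Algebras.

Arguments Alg {C} T.
Arguments AlgCat {C} T.
Arguments Ufun {C} T.
Arguments Equations {C} T.
Arguments satisfies {C T} Eq A.
Arguments lhom {C T} Eq A.
Arguments rhom {C T} Eq A.
Arguments AlgECat {C T} Eq.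
Arguments Vfun {C T} Eq.

(* The quotient [s_A] coequalizes the two sides of the equations, and since
   [E] preserves the epimorphism [s_A], the equations then hold in the
   quotient.  Conversely every homomorphism into an algebra satisfying the
   equations coequalizes the two sides, hence factors uniquely through [s_A]:
   [s_A] is a universal arrow from [A] into the subcategory, which gives the
   left adjoint.  When [A] already satisfies the equations, [s_A] is the
   identity and so is the counit. *)
From Stdlib Require Import ProofIrrelevance ClassicalEpsilon.

Set Implicit Arguments.
Unset Strict Implicit.

Lemma coequalizer_epi (D : Category) (P A Q : D) (f g : Hom P A) (q : Hom A Q) :
  is_coequalizer f g q -> epi q.
Proof.
  intros [Hq Huniv] Z u v Huv.
  assert (Hcoeq : (u ∘ q) ∘ f = (u ∘ q) ∘ g)
    by now rewrite <- !comp_assoc, Hq.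
  destruct (Huniv Z (u ∘ q) Hcoeq) as [w [_ Hw]].
  rewrite <- (Hw u eq_refl). apply Hw. now symmetry.
Qed.

Section Equations.
Variables (C : Category) (T : Monad C) (Eq : Equations T).

Local Notation "g ⋅ f" := (@comp (AlgCat T) _ _ _ g f)
  (at level 40, left associativity).

Lemma sharp_unit (X Y : C) (k : Hom X (T Y)) :
  (mmu T Y ∘ fmap T k) ∘ meta T X = k.
Proof.
  now rewrite <- comp_assoc, meta_nat, comp_assoc, mmu_eta_l, comp_id_l.
Qed.

Lemma free_alg_hom_ext (X : C) (B : Alg T) (u v : AlgHom (free_alg T X) B) :
  proj1_sig u ∘ meta T X = proj1_sig v ∘ meta T X -> u = v.
Proof.
  assert (Hsharp : forall w : AlgHom (free_alg T X) B,
             proj1_sig w = astr B ∘ fmap T (proj1_sig w ∘ meta T X)).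
  { intros [w Hw]; unfold is_alg_hom in Hw; simpl in *.
    rewrite fmap_comp, comp_assoc, <- Hw, <- comp_assoc.
    now rewrite (mmu_eta_r T X), comp_id_r. }
  intros Huv. apply AlgHom_eq. now rewrite (Hsharp u), (Hsharp v), Huv.
Qed.

Lemma lhom_unit (A : Alg T) :
  proj1_sig (lhom Eq A) ∘ meta T _ = astr A ∘ eql Eq (acar A).
Proof. simpl. now rewrite <- comp_assoc, sharp_unit. Qed.

Lemma rhom_unit (A : Alg T) :
  proj1_sig (rhom Eq A) ∘ meta T _ = astr A ∘ eqr Eq (acar A).
Proof. simpl. now rewrite <- comp_assoc, sharp_unit. Qed.

Lemma alg_hom_natural (F : Functor C C) (k : forall X : C, Hom (F X) (T X))
  (knat : forall X Y (f : Hom X Y), fmap T f ∘ k X = k Y ∘ fmap F f)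
  (A B : Alg T) (g : AlgHom A B) :
  proj1_sig g ∘ (astr A ∘ k (acar A))
  = (astr B ∘ k (acar B)) ∘ fmap F (proj1_sig g).
Proof.
  destruct g as [g Hg]; unfold is_alg_hom in Hg; simpl.
  now rewrite comp_assoc, Hg, <- !comp_assoc, knat.
Qed.

Lemma satisfies_coequalizes (A B : Alg T) (g : AlgHom A B) :
  satisfies Eq B -> g ⋅ lhom Eq A = g ⋅ rhom Eq A.
Proof.
  intros HB. apply free_alg_hom_ext.
  change (proj1_sig g ∘ proj1_sig (lhom Eq A) ∘ meta T _
          = proj1_sig g ∘ proj1_sig (rhom Eq A) ∘ meta T _).
  rewrite <- !comp_assoc, lhom_unit, rhom_unit.
  rewrite (alg_hom_natural (eql_nat Eq)), (alg_hom_natural (eqr_nat Eq)).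
  unfold satisfies in HB. now rewrite HB.
Qed.

Lemma satisfies_of_coequalizing (A B : Alg T) (q : AlgHom A B) :
  q ⋅ lhom Eq A = q ⋅ rhom Eq A -> epi (fmap (eqE Eq) (proj1_sig q)) ->
  satisfies Eq B.
Proof.
  intros Hq Hepi. apply Hepi.
  apply (f_equal (fun h => proj1_sig h ∘ meta T _)) in Hq.
  change (proj1_sig q ∘ proj1_sig (lhom Eq A) ∘ meta T _
          = proj1_sig q ∘ proj1_sig (rhom Eq A) ∘ meta T _) in Hq.
  rewrite <- !comp_assoc, lhom_unit, rhom_unit in Hq.
  now rewrite <- (alg_hom_natural (eql_nat Eq)), <- (alg_hom_natural (eqr_nat Eq)).
Qed.

Section Reflection.
Variables (Q : Alg T -> Alg T) (s : forall A : Alg T, AlgHom A (Q A)).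
Hypothesis Hs : forall A : Alg T,
  @is_coequalizer (AlgCat T) (free_alg T (eqE Eq (acar A))) A (Q A)
    (lhom Eq A) (rhom Eq A) (s A).

Lemma quotient_satisfies
  (HEU : forall (A B : AlgCat T) (q : Hom A B), regular_epi q ->
          epi (fmap (eqE Eq) (fmap (Ufun T) q)))
  (A : Alg T) : satisfies Eq (Q A).
Proof.
  apply (satisfies_of_coequalizing (q := s A)).
  - exact (proj1 (Hs A)).
  - apply (HEU _ _ (s A)). do 3 eexists. apply Hs.
Qed.

Lemma quotient_hom_ext (A Z : Alg T) (u v : AlgHom (Q A) Z) :
  u ⋅ s A = v ⋅ s A -> u = v.
Proof. apply (coequalizer_epi (Hs A)). Qed.

Lemma quotient_lift_ex (A B : Alg T) (HB : satisfies Eq B) (g : AlgHom A B) :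
  exists u : AlgHom (Q A) B, u ⋅ s A = g.
Proof.
  destruct (proj2 (Hs A) B g (satisfies_coequalizes g HB)) as [u [Hu _]].
  now exists u.
Qed.

Definition quotient_lift (A B : Alg T) (HB : satisfies Eq B) (g : AlgHom A B) :
  AlgHom (Q A) B :=
  proj1_sig (constructive_indefinite_description _ (quotient_lift_ex HB g)).

Lemma quotient_lift_comp (A B : Alg T) (HB : satisfies Eq B) (g : AlgHom A B) :
  quotient_lift HB g ⋅ s A = g.
Proof.
  exact (proj2_sig (constructive_indefinite_description _ (quotient_lift_ex HB g))).
Qed.

Hypothesis QS : forall A : Alg T, satisfies Eq (Q A).

Definition reflect_ob (A : Alg T) : AlgE_ob Eq := exist _ (Q A) (QS A).

Definition reflect_hom (A B : Alg T) (f : AlgHom A B) : AlgHom (Q A) (Q B) :=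
  quotient_lift (QS B) (s B ⋅ f).

Lemma reflect_hom_id (A : Alg T) : reflect_hom (alg_idm A) = alg_idm (Q A).
Proof.
  apply quotient_hom_ext. unfold reflect_hom.
  rewrite quotient_lift_comp.
  exact (eq_trans (comp_id_r (c := AlgCat T) _) (eq_sym (comp_id_l (c := AlgCat T) _))).
Qed.

Lemma reflect_hom_comp (A B D : Alg T) (g : AlgHom B D) (f : AlgHom A B) :
  reflect_hom (g ⋅ f) = reflect_hom g ⋅ reflect_hom f.
Proof.
  apply quotient_hom_ext. unfold reflect_hom.
  rewrite quotient_lift_comp, <- (comp_assoc (c := AlgCat T)), quotient_lift_comp.
  now rewrite !(comp_assoc (c := AlgCat T)), quotient_lift_comp.
Qed.

Definition reflector : Functor (AlgCat T) (AlgECat Eq) :=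
  {| fobj := reflect_ob : AlgCat T -> AlgECat Eq;
     fmap := reflect_hom;
     fmap_id := reflect_hom_id;
     fmap_comp := reflect_hom_comp |}.

Definition reflect_counit (B : AlgE_ob Eq) : AlgHom (Q (proj1_sig B)) (proj1_sig B) :=
  quotient_lift (proj2_sig B) (alg_idm _).

Lemma reflect_counit_comp (B : AlgE_ob Eq) :
  reflect_counit B ⋅ s (proj1_sig B) = alg_idm _.
Proof. apply quotient_lift_comp. Qed.

Definition reflection : Adjunction reflector (Vfun Eq).
Proof.
  refine {| adj_unit := s : forall A : AlgCat T, Hom A (Vfun Eq (reflector A));
            adj_counit := reflect_counit |}.
  - intros A A' f. apply quotient_lift_comp.
  - intros B B' g. apply quotient_hom_ext.
    change ((g ⋅ reflect_counit B) ⋅ s (proj1_sig B)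
            = (reflect_counit B' ⋅ reflect_hom g) ⋅ s (proj1_sig B)).
    rewrite <- !(comp_assoc (c := AlgCat T)), reflect_counit_comp.
    unfold reflect_hom. rewrite quotient_lift_comp.
    rewrite (comp_assoc (c := AlgCat T)), reflect_counit_comp.
    now rewrite (comp_id_l (c := AlgCat T)), (comp_id_r (c := AlgCat T)).
  - intros A. apply quotient_hom_ext.
    change ((reflect_counit (reflect_ob A) ⋅ reflect_hom (s A)) ⋅ s A
            = alg_idm (Q A) ⋅ s A).
    rewrite <- (comp_assoc (c := AlgCat T)). unfold reflect_hom.
    rewrite quotient_lift_comp, (comp_assoc (c := AlgCat T)).
    exact (f_equal (fun h => h ⋅ s A) (reflect_counit_comp (reflect_ob A))).
  - intros B. apply reflect_counit_comp.
Defined.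

Lemma reflect_counit_of_id (B : AlgE_ob Eq) :
  existT (fun X : AlgCat T => AlgHom (proj1_sig B) X) (Q (proj1_sig B)) (s _)
  = existT _ (proj1_sig B) (@idm (AlgCat T) _) ->
  existT (fun X : AlgECat Eq => @Hom (AlgECat Eq) X B)
    (reflect_ob (proj1_sig B)) (reflect_counit B)
  = existT (fun X : AlgECat Eq => @Hom (AlgECat Eq) X B) B (@idm (AlgECat Eq) B).
Proof.
  destruct B as [B HB]; simpl. intros Hid.
  (* generalize the target of [s B] so that [Hid] can be destructed *)
  enough (Hgen : forall p : {X : Alg T & AlgHom B X},
             existT _ B (@idm (AlgCat T) B) = p ->
             forall (HX : satisfies Eq (projT1 p)) (u : AlgHom (projT1 p) B),
             u ⋅ projT2 p = @idm (AlgCat T) B ->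
             existT (fun X : AlgECat Eq => @Hom (AlgECat Eq) X (exist _ B HB))
               (exist _ (projT1 p) HX) u
             = existT (fun X : AlgECat Eq => @Hom (AlgECat Eq) X (exist _ B HB))
                 (exist _ B HB) (@idm (AlgECat Eq) (exist _ B HB))).
  { exact (Hgen _ (eq_sym Hid) (QS B) _ (reflect_counit_comp (exist _ B HB))). }
  intros p <- HX u Hu; simpl projT1 in *; simpl projT2 in Hu.
  rewrite (comp_id_r (c := AlgCat T)) in Hu. subst u.
  now rewrite (proof_irrelevance _ HX HB).
Qed.

End Reflection.

Lemma Vfun_full_faithful (X Y : AlgECat Eq)
  (f : @Hom (AlgCat T) (Vfun Eq X) (Vfun Eq Y)) :
  exists! g : @Hom (AlgECat Eq) X Y, fmap (Vfun Eq) g = f.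
Proof. exists f. split; [reflexivity | now intros g <-]. Qed.

End Equations.

Theorem lemma2p4
  (C : Category) (T : Monad C) (Eq : Equations T)
  (Hcoeq_all : has_coequalizers (AlgCat T))
  (HU : forall (A B : AlgCat T) (q : Hom A B), regular_epi q ->
          epi (fmap (Ufun T) q) /\ epi (fmap T (fmap (Ufun T) q)))
  (HEU : forall (A B : AlgCat T) (q : Hom A B), regular_epi q ->
          epi (fmap (eqE Eq) (fmap (Ufun T) q)))
  (Q : Alg T -> Alg T)
  (s : forall A : Alg T, Hom (c := AlgCat T) A (Q A))
  (Hs : forall A : Alg T,
     @is_coequalizer (AlgCat T) (free_alg T (eqE Eq (acar A))) A (Q A)
       (lhom Eq A) (rhom Eq A) (s A))
  (Hs_id : forall A : Alg T, satisfies Eq A ->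
     existT (fun X : AlgCat T => @Hom (AlgCat T) A X) (Q A) (s A)
     = existT (fun X : AlgCat T => @Hom (AlgCat T) A X) A (@idm (AlgCat T) A)) :
  (forall A : Alg T, satisfies Eq (Q A)) /\
  exists (H : Functor (AlgCat T) (AlgECat Eq))
         (adj : Adjunction H (Vfun Eq)),
    (forall A : AlgCat T, proj1_sig (H A) = Q A) /\
    (forall A : AlgCat T,
       existT (fun X : AlgCat T => @Hom (AlgCat T) A X) (Vfun Eq (H A)) (adj_unit adj A)
       = existT (fun X : AlgCat T => @Hom (AlgCat T) A X) (Q A) (s A)) /\
    (forall B : AlgECat Eq,
       existT (fun X : AlgECat Eq => @Hom (AlgECat Eq) X B) (H (Vfun Eq B)) (adj_counit adj B)
       = existT (fun X : AlgECat Eq => @Hom (AlgECat Eq) X B) B (idm B)) /\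
    (forall (X Y : AlgECat Eq) (f : @Hom (AlgCat T) (Vfun Eq X) (Vfun Eq Y)),
       exists! g : @Hom (AlgECat Eq) X Y, fmap (Vfun Eq) g = f).
Proof.
  pose proof (quotient_satisfies Hs HEU) as QS.
  split; [exact QS |].
  exists (reflector Hs QS), (reflection Hs QS).
  split; [reflexivity |].
  split; [reflexivity |].
  split.
  - intros B. apply reflect_counit_of_id, Hs_id, proj2_sig.
  - apply Vfun_full_faithful.
Qed.
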